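(* Let $n\ge1$, $0<T_0<T_1<\dots<T_n$ with $T_i=T_{i-1}+P$ ($1\le i\le n$) for some $P>0$, let $0<B_{\mathrm{low}}<B_{\mathrm{up}}$, $F>0$, and let $C_i:=\mathbf{1}_{\{B_{\mathrm{low}}<S_u<B_{\mathrm{up}}\ \forall u\in[T_{i-1},T_i]\}}$ for $1\le i\le n$, $A:=\sum_{i=1}^nC_i$. Fix $t<T_0$ and write $\mathbb{P}_t,\mathbb{E}_t$ for (risk-neutral) probability and expectation conditional on $\mathcal{F}_t$. Then the time-$t$ price of the payoff $(F-A)^+$ paid at $T_n$ satisfies \[ e^{-r(T_n-t)}\mathbb{E}_t[(F-A)^+]=e^{-r(T_n-t)}\sum_{i=0}^{n\wedge\lfloor F\rfloor}(F-i)\,\mathbb{P}_t[A=i], \] where $\mathbb{P}_t[A=n]=\mathbb{P}_t[B_{\mathrm{low}}<S_u<B_{\mathrm{up}}\ \forall u\in[T_0,T_n]]$; the remaining point masses $\mathbb{P}_t[A=i]$, $0\le i\le n-1$, are determined by $\mathbb{P}_t[A=n]$ and the moments $\mathbb{E}_t[A^\nu]$, $0\le\nu<n$, through the linear system $\mathbb{E}_t[A^\nu]=\sum_{i=0}^n i^\nu\,\mathbb{P}_t[A=i]$; and for $1\le\nu<n$, \[ \mathbb{E}_t[A^\nu]=\sum_{J\subseteq\{1,\dots,n\}}c(\nu,J)\,\mathbb{P}_t\big[B_{\mathrm{low}}<S_u<B_{\mathrm{up}}\ \forall u\in\textstyle\bigcup_{j\in J}[T_{j-1},T_{j-1}+P]\big],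 \] with $c(\nu,J):=\sum_{0\le i_1,\dots,i_n\le\nu,\ \mathrm{supp}(\mathbf{i})=J}\binom{\nu}{i_1,\dots,i_n}$.
   Context: Black–Scholes model under the pricing measure: $dS_t/S_t=r\,dt+\sigma\,dW_t$, $r>0$, $\sigma>0$, $W$ a standard Brownian motion with filtration $(\mathcal{F}_t)$. For $\mathbf{i}=(i_1,\dots,i_n)$, $\mathrm{supp}(\mathbf{i})$ is the set of indices $k$ with $i_k\neq0$, and $\binom{\nu}{i_1,\dots,i_n}$ is the multinomial coefficient (zero unless $i_1+\dots+i_n=\nu$). The conditional probabilities appearing are the undiscounted prices (i.e. $e^{r(\cdot)}$ times the discounted prices) of multi-period double barrier digitals. *)

From HB Require Import structures.
From mathcomp Require Import all_boot all_order all_algebra.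
From mathcomp Require Import all_classical all_reals all_analysis.
From mathcomp Require Import normal_distribution.
Set Implicit Arguments. Unset Strict Implicit. Unset Printing Implicit Defensive.
Import Order.TTheory GRing.Theory Num.Theory.
Import numFieldNormedType.Exports.
Local Open Scope classical_set_scope.
Local Open Scope ring_scope.

Section defs.
Context {R : realType} {d : measure_display} {Omega : measurableType d}.

Definition G_measurable (G : set (set Omega)) (Y : Omega -> R) :=
  forall B : set R, measurable B -> G (Y @^-1` B).

Definition is_cond_exp (P : probability Omega R) (G : set (set Omega))
    (X Y : Omega -> R) :=
  [/\ G_measurable G Y, P.-integrable setT (EFin \o Y) &
      forall A, G A ->
        (\int[P]_(x in A) (Y x)%:E = \int[P]_(x in A) (X x)%:E)%E].

Definition is_filtration (F : R -> set (set Omega)) :=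
  (forall s, 0 <= s -> sigma_algebra setT (F s) /\ F s `<=` measurable) /\
  (forall s u, 0 <= s -> s <= u -> F s `<=` F u).

Definition std_BM (P : probability Omega R) (F : R -> set (set Omega))
    (W : R -> Omega -> R) :=
  [/\ forall w, W 0 w = 0,
      forall w, {within `[0, +oo[, continuous (fun u => W u w)},
      forall s, 0 <= s -> G_measurable (F s) (W s),
      forall s u, 0 <= s -> s < u -> forall B : set R, measurable B ->
        P ((fun w => W u w - W s w) @^-1` B) = normal_prob 0 (Num.sqrt (u - s)) B
    & forall s u, 0 <= s -> s < u -> forall (A : set Omega) (B : set R),
        F s A -> measurable B ->
        P (A `&` (fun w => (W u w - W s w)%R) @^-1` B) =
        (P A * P ((fun w => (W u w - W s w)%R) @^-1` B))%E].

Definition inside (S : R -> Omega -> R) (Blow Bup : R) (I : set R) : set Omega :=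
  [set w | forall u, I u -> Blow < S u w < Bup].
End defs.

Definition multinom (nu : nat) (k : seq nat) : nat :=
  if sumn k == nu then (nu`! %/ \prod_(x <- k) x`!)%N else 0%N.

Definition cnuJ (nu n : nat) (J : {set 'I_n}) : nat :=
  (\sum_(i : {ffun 'I_n -> 'I_nu.+1} | finset (fun k => val (i k) != 0%N) == J)
     multinom nu [seq val (i k) | k <- enum 'I_n])%N.

From HB Require Import structures.
From mathcomp Require Import all_boot all_order all_algebra.
From mathcomp Require Import all_classical all_reals all_analysis measurable_realfun.
From mathcomp Require Import normal_distribution.
From mathcomp Require Import ring lra.
Import Order.TTheory GRing.Theory Num.Theory.
Import numFieldNormedType.Exports.
Local Open Scope classical_set_scope.
Local Open Scope ring_scope.

(* The count A of periods in which the path stays inside the corridor takes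
   values in {0, ..., n}, so (F - A)^+, A^nu and the indicator of {A = n} are
   pointwise linear combinations of the indicators of {A = i}; expanding
   A^nu = (C_1 + ... + C_n)^nu by the multinomial theorem and using C_k^j = C_k
   for j >= 1 rewrites A^nu in terms of the indicators of the events
   "inside on every period of J", with coefficients c(nu, J).  Since
   conditional expectations are almost surely unique and linear, the same
   identities hold between the conditional probabilities and moments.
   Finally the moment equations for nu < n, together with the value at i = n,
   form a Vandermonde-type system on the nodes 0, ..., n: a nonzero polynomial
   of degree < n cannot vanish at n of these nodes, so the system has a unique
   solution. *)

Section conditional_expectation.
Context {R : realType} {d : measure_display} {Omega : measurableType d}.
Context {P : probability Omega R} {G : set (set Omega)}.
Hypotheses (sigmaG : sigma_algebra setT G) (subG : G `<=` measurable).

Lemma G_measurableP (Y : Omega -> R) :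
  G_measurable G Y <-> measurable_fun (setT : set (g_sigma_algebraType G)) Y.
Proof.
split => [mY _ B mB|mY B mB].
  by rewrite setTI; apply: sub_sigma_algebra; exact: mY.
by have := mY measurableT B mB; rewrite setTI /measurable /= sigma_algebra_id.
Qed.

Lemma G_measurable_measurable (Y : Omega -> R) :
  G_measurable G Y -> measurable_fun setT Y.
Proof. by move=> mY _ B mB; rewrite setTI; apply/subG/mY. Qed.

Lemma G_measurable_lt (Y1 Y2 : Omega -> R) :
  G_measurable G Y1 -> G_measurable G Y2 -> G [set w | Y1 w < Y2 w].
Proof.
move=> /G_measurableP m1 /G_measurableP m2.
have /G_measurableP := measurable_funB m2 m1.
move=> /(_ `]0, +oo[%classic (measurable_itv _)); congr G.
by apply/seteqP; split => w /=; rewrite in_itv /= andbT subr_gt0.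
Qed.

Lemma is_cond_exp_lt_null (X Y1 Y2 : Omega -> R) :
  is_cond_exp P G X Y1 -> is_cond_exp P G X Y2 -> P [set w | Y1 w < Y2 w] = 0%E.
Proof.
move=> [m1 i1 e1] [m2 i2 e2]; set A := [set w | Y1 w < Y2 w].
have GA : G A by exact: G_measurable_lt.
have mA : measurable A by exact: subG.
have i1A : P.-integrable A (EFin \o Y1) by exact: integrableS i1.
have i2A : P.-integrable A (EFin \o Y2) by exact: integrableS i2.
have int0 : (\int[P]_(x in A) ((Y2 x)%:E - (Y1 x)%:E) = 0)%E.
  rewrite integralB_EFin // e2 // -e1 //; apply: subee.
  exact: (integrable_fin_num mA i1A).
have mD : measurable_fun A (EFin \o (Y2 \- Y1)).
  apply/measurable_EFinP/measurable_funTS/measurable_funB;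
  exact: G_measurable_measurable.
have [|N [mN PN sN]] := (ae_eq_integral_abs P mA mD).1.
  rewrite -[RHS]int0; apply: eq_integral => x; rewrite inE => Ax.
  by rewrite /= ger0_norm // subr_ge0 ltW.
apply: (subset_measure0 mA mN) => // w Aw; apply: sN => /= /(_ Aw) /eqP.
by rewrite eqe subr_eq0 gt_eqF.
Qed.

Lemma is_cond_exp_unique (X Y1 Y2 : Omega -> R) :
  is_cond_exp P G X Y1 -> is_cond_exp P G X Y2 -> {ae P, forall w, Y1 w = Y2 w}.
Proof.
move=> c1 c2; have mlt Z1 Z2 : is_cond_exp P G X Z1 -> is_cond_exp P G X Z2 ->
    measurable [set w | Z1 w < Z2 w].
  by move=> [m1 _ _] [m2 _ _]; apply: subG; exact: G_measurable_lt.
exists ([set w | Y1 w < Y2 w] `|` [set w | Y2 w < Y1 w]); split.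
- by apply: measurableU; exact: mlt.
- rewrite measureU0; [exact: is_cond_exp_lt_null c1 c2|exact: mlt c1 c2|
    exact: mlt c2 c1|exact: is_cond_exp_lt_null c2 c1].
- by move=> w /= /eqP; rewrite neq_lt => /orP[]; [left|right].
Qed.

Lemma is_cond_exp_lincomb (I : finType) (a : I -> R) (Xs Ys : I -> Omega -> R)
    (X Y : Omega -> R) :
  (forall i, P.-integrable setT (EFin \o Xs i)) ->
  (forall i, is_cond_exp P G (Xs i) (Ys i)) ->
  is_cond_exp P G X Y -> (forall w, X w = \sum_i a i * Xs i w) ->
  {ae P, forall w, Y w = \sum_i a i * Ys i w}.
Proof.
move=> iX cY cX eX.
apply: (@is_cond_exp_unique X Y (fun w => \sum_i a i * Ys i w) cX).
have iY D i : measurable D -> P.-integrable D (EFin \o Ys i).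
  by case: (cY i) => _ iYi _ mD; exact: integrableS iYi.
have iaY D i : measurable D -> P.-integrable D (fun w => (a i)%:E * (Ys i w)%:E)%E.
  by move=> mD; exact: (integrableZl mD _ (iY D i mD)).
have sumE (Z : I -> Omega -> R) w :
    ((\sum_i a i * Z i w)%:E = \sum_i (a i)%:E * (Z i w)%:E)%E.
  by rewrite -sumEFin; apply: eq_bigr.
split.
- apply/G_measurableP/measurable_sum => i; apply: measurable_funM.
    exact: measurable_cst.
  by case: (cY i) => /G_measurableP.
- rewrite (_ : _ \o _ = fun w => \sum_i (a i)%:E * (Ys i w)%:E)%E.
    by apply: (integrable_sum measurableT) => i _; exact: iaY.
  by apply/funext => w; exact: sumE.
- move=> A GA; have mA := subG _ GA.
  under eq_integral do rewrite sumE; under [RHS]eq_integral do rewrite eX sumE.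
  have iXA i : P.-integrable A (EFin \o Xs i).
    exact: integrableS measurableT mA (subsetT _) (iX i).
  have iaX i : P.-integrable A (fun w => (a i)%:E * (Xs i w)%:E)%E.
    exact: (integrableZl mA _ (iXA i)).
  rewrite (integral_sum mA (iaY A ^~ mA)) (integral_sum mA iaX).
  apply: eq_bigr => i _; rewrite (integralZl mA (iY A i mA)) (integralZl mA (iXA i)).
  by case: (cY i) => _ _ ->.
Qed.

End conditional_expectation.

Section inside_measurable.
Context {R : realType} {d : measure_display} {Omega : measurableType d}.
Variables (f : R -> Omega -> R) (lo hi a b : R).
Hypothesis ab : a < b.
Hypothesis cf : forall w u, a <= u <= b -> {for u, continuous (fun v => f v w)}.

(* By continuity of the paths, staying strictly inside on [a, b] is decided on
   the countably many rational times, with a uniform margin 1/(m+1): strict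
   inequalities at rational times alone would not survive the passage to limits. *)
Definition inside_rat_margin (m : nat) : set Omega :=
  [set w | forall q : rat, ratr q \in `[a, b] ->
     lo + m.+1%:R^-1 <= f (ratr q) w <= hi - m.+1%:R^-1].

Lemma inside_sub_rat_margin : inside f lo hi `[a, b] `<=` \bigcup_m inside_rat_margin m.
Proof.
move=> w inw; set g := fun v => f v w.
have cg : {within `[a, b], continuous g}.
  by apply: continuous_in_subspaceT => u; rewrite inE /= in_itv /=; exact: cf.
have [c1 c1ab minc1] := EVT_min (ltW ab) cg.
have [c2 c2ab maxc2] := EVT_max (ltW ab) cg.
have /andP[loc1 _] := inw c1 c1ab; have /andP[_ c2hi] := inw c2 c2ab.
pose del := Num.min (g c1 - lo) (hi - g c2).
have del0 : 0 < del by rewrite lt_min !subr_gt0 loc1 c2hi.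
have margin : (Num.truncn del^-1).+1%:R^-1 < del.
  by rewrite invf_plt ?posrE ?ltr0n // -truncn_lt_nat ?invr_ge0 ?ltW.
exists (Num.truncn del^-1) => // q qab; have := minc1 _ qab; have := maxc2 _ qab.
rewrite /g => q2 q1; apply/andP; split.
- apply: le_trans q1; rewrite -lerBrDl; apply/ltW/(lt_le_trans margin).
  by rewrite ge_min lexx.
- apply: le_trans q2 _; rewrite lerBrDr -lerBrDl; apply/ltW/(lt_le_trans margin).
  by rewrite ge_min lexx orbT.
Qed.

Lemma rat_margin_sub_inside m : inside_rat_margin m `<=` inside f lo hi `[a, b].
Proof.
move=> w wm u; rewrite /= in_itv /= => /andP[au ub].
have e0 : 0 < m.+1%:R^-1 :> R by rewrite invr_gt0 ltr0n.
have := cf w u; rewrite au ub => /(_ isT) /cvgrPdist_lt /(_ _ e0).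
move=> /nbhs_ballP[del /= del0 near_u].
have [q] : exists q : rat, ratr q \in `]Num.max a (u - del), Num.min b (u + del)[.
  (* [lra] does not see section hypotheses, hence [have := ab]. *)
  apply: rat_in_itvoo; have := ab; rewrite gt_max !lt_min => ab'.
  by apply/andP; split; apply/andP; split; lra.
rewrite in_itv /= gt_max lt_min => /andP[/andP[aq uq] /andP[qb qu]].
have /wm /andP[q1 q2] : ratr q \in `[a, b] by rewrite in_itv /= (ltW aq) (ltW qb).
have /near_u : ball u del (ratr q) by rewrite /ball /= ltr_norml; apply/andP; split; lra.
rewrite /= ltr_norml => /andP[h1 h2]; move: q1 q2 h1 h2.
(* [lra] fails on the nonlinear atom [m.+1%:R^-1]; generalize it first. *)
by move: (m.+1%:R^-1 : R) => e *; apply/andP; split; lra.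
Qed.

Lemma inside_itvE : inside f lo hi `[a, b] = \bigcup_m inside_rat_margin m.
Proof.
apply/seteqP; split; first exact: inside_sub_rat_margin.
by move=> w [m _]; exact: rat_margin_sub_inside.
Qed.

Lemma measurable_inside :
  (forall u, a <= u <= b -> measurable_fun setT (f u)) ->
  measurable (inside f lo hi `[a, b]).
Proof.
move=> mf; rewrite inside_itvE; apply: bigcupT_measurable => m.
have -> : inside_rat_margin m = \bigcap_q
    [set w | ratr q \in `[a, b] ->
       f (ratr q) w \in `[lo + m.+1%:R^-1, hi - m.+1%:R^-1]].
  apply/seteqP; split => w wm q; first by move=> _ /wm; rewrite in_itv.
  by move=> qab; have := wm q I qab; rewrite in_itv.
rewrite -[X in measurable X]setCK setC_bigcap; apply: measurableC.
apply: bigcupT_measurable_rat => q; apply: measurableC.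
have [qab|_] := boolP (ratr q \in `[a, b]); last first.
  by rewrite (_ : [set w | _] = setT) //; apply/seteqP; split.
rewrite (_ : [set w | _] = f (ratr q) @^-1` `[lo + m.+1%:R^-1, hi - m.+1%:R^-1]).
  by rewrite -[X in measurable X]setTI; apply: mf => //; rewrite -in_itv.
by apply/seteqP; split => w /=; [apply|move=> + _].
Qed.

End inside_measurable.

Lemma prod_fact_dvd_fact_sumn (s : seq nat) : (\prod_(x <- s) x`! %| (sumn s)`!)%N.
Proof.
elim: s => [|j s ih]; first by rewrite big_nil.
rewrite big_cons /= -(bin_fact (leq_addr (sumn s) j)) addKn.
by rewrite mulnCA dvdn_mul // dvdn_mull.
Qed.

Lemma multinom_cons nu j s : multinom nu (j :: s) =
  if (j <= nu)%N then ('C(nu, j) * multinom (nu - j) s)%N else 0%N.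
Proof.
rewrite /multinom /=; case: ifP => [/eqP <-|hne].
  rewrite leq_addr addKn eqxx big_cons.
  have [Q dvdQ] := dvdnP (prod_fact_dvd_fact_sumn s).
  rewrite -(bin_fact (leq_addr (sumn s) j)) addKn dvdQ.
  have Pgt0 : (0 < \prod_(x <- s) x`!)%N by rewrite prodn_gt0 // => x; exact: fact_gt0.
  set Pf := \prod_(x <- s) x`!; set C := 'C(_, _).
  have -> : (C * (j`! * (Q * Pf)) = (C * Q) * (j`! * Pf))%N by ring.
  by rewrite !mulnK // muln_gt0 fact_gt0.
case: ifP => // jnu; case: eqP => [hs|_]; last by rewrite muln0.
by move/eqP: hne; rewrite hs subnKC.
Qed.

Definition ffun_cons {n} {T : Type} (j : T) (g : {ffun 'I_n -> T}) : {ffun 'I_n.+1 -> T} :=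
  [ffun k => if unlift ord0 k is Some k' then g k' else j].

Lemma ffun_cons0 n T j g : @ffun_cons n T j g ord0 = j.
Proof. by rewrite ffunE unlift_none. Qed.

Lemma ffun_consS n T j g k : @ffun_cons n T j g (lift ord0 k) = g k.
Proof. by rewrite ffunE liftK. Qed.

Lemma big_ffun_ord_recl (R : nmodType) (T : finType) n (F : {ffun 'I_n.+1 -> T} -> R) :
  \sum_f F f = \sum_(j : T) \sum_(g : {ffun 'I_n -> T}) F (ffun_cons j g).
Proof.
rewrite pair_big /= (reindex (fun p : T * {ffun 'I_n -> T} => ffun_cons p.1 p.2)) //.
exists (fun f : {ffun 'I_n.+1 -> T} => (f ord0, [ffun k : 'I_n => f (lift ord0 k)])).
  move=> [j g] _ /=; rewrite ffun_cons0; congr (_, _).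
  by apply/ffunP => k; rewrite ffunE ffun_consS.
move=> f _; apply/ffunP => k; rewrite ffunE; case: unliftP => [k' ->|->] //.
by rewrite ffunE.
Qed.

(* Any exponent bound [B >= nu] works: larger exponents get coefficient 0. *)
Lemma multinomial_expansion (R : comNzRingType) (B n nu : nat) (x : 'I_n -> R) :
  (nu <= B)%N -> (\sum_k x k) ^+ nu = \sum_(i : {ffun 'I_n -> 'I_B.+1})
     (multinom nu [seq val (i k) | k <- enum 'I_n])%:R * \prod_k x k ^+ i k.
Proof.
elim: n nu x => [|n ih] nu x nuB.
  rewrite big_ord0 (big_pred1 [ffun k => ord0]); last first.
    by move=> f; apply/esym/eqP/ffunP => -[].
  rewrite big_ord0 mulr1 enum_ord0 /= /multinom /= big_nil divn1.
  by case: nu {nuB} => [|nu]; rewrite ?expr0 ?expr0n.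
rewrite big_ord_recl addrC exprDn big_ffun_ord_recl.
have seq_cons (j : 'I_B.+1) g : [seq val (ffun_cons j g k) | k <- enum 'I_n.+1] =
    val j :: [seq val (g k) | k <- enum 'I_n].
  rewrite enum_ordSl /= ffun_cons0 -map_comp; congr (_ :: _).
  by apply: eq_map => k /=; rewrite ffun_consS.
rewrite (big_ord_widen B.+1 (fun j => ((\sum_(i < n) x (lift ord0 i)) ^+ (nu - j)
  * x ord0 ^+ j) *+ 'C(nu, j))) // big_mkcond; apply: eq_bigr => j _; rewrite ltnS.
case: ifP => jnu; last by rewrite big1 // => g _; rewrite seq_cons multinom_cons jnu mul0r.
rewrite (ih (nu - j)%N) ?(leq_trans (leq_subr _ _)) // -mulr_natr !mulr_suml.
apply: eq_bigr => g _; rewrite seq_cons multinom_cons jnu natrM big_ord_recl ffun_cons0.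
under [in RHS]eq_bigr do rewrite ffun_consS.
ring.
Qed.

Lemma expr_sum01 (R : comNzRingType) n nu (c : 'I_n -> R) :
  (forall k, c k = 0 \/ c k = 1) ->
  (\sum_k c k) ^+ nu = \sum_(J : {set 'I_n}) (cnuJ nu J)%:R * \prod_(k in J) c k.
Proof.
move=> c01; rewrite (@multinomial_expansion R nu) //.
rewrite (partition_big (fun i : {ffun 'I_n -> 'I_nu.+1} =>
  finset (fun k => val (i k) != 0%N)) xpredT) //.
apply: eq_bigr => J _; rewrite /cnuJ natr_sum mulr_suml.
apply: eq_big => [i //|i /eqP suppJ]; congr (_ * _).
rewrite (bigID (mem J)) /= [X in _ * X]big1 ?mulr1.
  apply: eq_bigr => k; rewrite -suppJ inE => ik0.
  by case: (c01 k) => ->; rewrite ?expr0n ?expr1n // (negPf ik0).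
by move=> k; rewrite -suppJ inE negbK => /eqP ->; rewrite expr0.
Qed.

Lemma natr_vanishing_poly (R : numFieldType) n j : (j < n)%N ->
  exists2 p : {poly R}, (size p <= n)%N &
    forall i, (i < n)%N -> (p.[i%:R] == 0) = (i != j).
Proof.
move=> jn; pose r := [seq i <- iota 0 n | i != j].
exists (\prod_(a <- [seq (i%:R : R) | i <- r]) ('X - a%:P)).
  rewrite size_prod_XsubC size_map size_filter.
  have := count_predC (fun i => i != j) (iota 0 n); rewrite size_iota.
  have -> : count (predC (fun i => i != j)) (iota 0 n) = count_mem j (iota 0 n).
    by apply: eq_count => i /=; rewrite negbK.
  rewrite count_uniq_mem ?iota_uniq // mem_iota add0n jn /= => count_n.
  by rewrite -[in X in (_ < X)%N]count_n addn1.
move=> i ilt; rewrite horner_prod prodf_seq_eq0; apply/hasP/idP => [[a /mapP[k]]|ij].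
  rewrite mem_filter mem_iota => /andP[kj _] ->.
  by rewrite /= hornerXsubC subr_eq0 eqr_nat => /eqP ->.
exists i%:R; last by rewrite /= hornerXsubC subrr.
by apply/mapP; exists i => //; rewrite mem_filter mem_iota ij ilt.
Qed.

Lemma natr_moments_inj (R : numFieldType) n (x y : nat -> R) :
  (forall nu, (nu < n)%N ->
    \sum_(i < n.+1) (i%:R) ^+ nu * x i = \sum_(i < n.+1) (i%:R) ^+ nu * y i) ->
  x n = y n -> forall i, (i <= n)%N -> x i = y i.
Proof.
move=> xym xyn; suff z0 i : (i <= n)%N -> x i - y i = 0.
  by move=> i /z0 /eqP; rewrite subr_eq0 => /eqP.
have zpoly0 (p : {poly R}) : (size p <= n)%N ->
    \sum_(i < n.+1) p.[i%:R] * (x i - y i) = 0.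
  move=> sp; under eq_bigr do rewrite (horner_coef_wide _ sp) mulr_suml.
  rewrite exchange_big /=; apply: big1 => nu _.
  under eq_bigr do rewrite -mulrA; rewrite -mulr_sumr.
  by under eq_bigr do rewrite mulrBr; rewrite sumrB xym // subrr mulr0.
rewrite leq_eqVlt => /orP[/eqP -> |ltin]; first by rewrite xyn subrr.
have [p sp pi0] := natr_vanishing_poly R _ _ ltin.
move: (zpoly0 p sp); rewrite (bigD1 (@Ordinal n.+1 i (ltnW ltin))) //= big1 ?addr0.
  by move/eqP; rewrite mulf_eq0 pi0 // eqxx /= => /eqP.
move=> [k klt] /= ki; have [kn|] := ltnP k n.
  by rewrite (eqP _ : p.[k%:R] = 0) ?mul0r // pi0.
move=> nk; have -> : k = n by apply/eqP; rewrite eqn_leq nk andbT -ltnS.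
by rewrite xyn subrr mulr0.
Qed.

Lemma sum_mul_eqn {R : pzSemiRingType} (G : nat -> R) (K N : nat) :
  \sum_(i < K) G i * (N == i)%:R = if (N < K)%N then G N else 0.
Proof.
case: ifP => NK.
  rewrite (bigD1 (Ordinal NK)) //= eqxx mulr1 big1 ?addr0 // => i iN.
  by case: eqP => [Ni|_]; [move: iN; rewrite -(inj_eq val_inj) /= Ni eqxx|rewrite mulr0].
apply: big1 => i _; case: eqP => [Ni|_]; last by rewrite mulr0.
by move: NK; rewrite Ni ltn_ord.
Qed.

Section occupation.
Context {R : realType} {T : Type} {n : nat} (E : 'I_n -> set T).

Definition occupation (w : T) : nat := (\sum_(k < n) (w \in E k))%N.

Local Notation indic_sum w := (\sum_(k < n) @indic _ R (E k) w).

Lemma sum_indic_occupation w : indic_sum w = (occupation w)%:R.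
Proof. by rewrite natr_sum; apply: eq_bigr => k _; rewrite indicE. Qed.

Let sum1n : (\sum_(k < n) 1)%N = n. Proof. by rewrite sum1_card card_ord. Qed.

Lemma occupation_le w : (occupation w <= n)%N.
Proof. by rewrite -[leqRHS]sum1n; apply: leq_sum => k _; exact: leq_b1. Qed.

Lemma occupation_eq_n w : (occupation w == n) = [forall k, w \in E k].
Proof.
rewrite -[X in _ == X]sum1n /occupation eqn_leq leq_sum /= => [|k _]; last exact: leq_b1.
apply/idP/forallP => [le_sum k|allE]; last by apply: leq_sum => j _; rewrite allE.
apply: contraTT le_sum => /negbTE kE; rewrite -ltnNge.
rewrite [ltnRHS](bigD1 k) // [ltnLHS](bigD1 k) //= kE add0n add1n ltnS.
by apply: leq_sum => j _; exact: leq_b1.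
Qed.

Lemma indic_occupationE (i : nat) w :
  \1_[set v | indic_sum v = i%:R] w = (occupation w == i)%:R :> R.
Proof.
rewrite indicE; congr (nat_of_bool _)%:R; apply/idP/idP.
  by move=> /set_mem; rewrite /= sum_indic_occupation => /eqP; rewrite eqr_nat.
by move=> /eqP Ni; apply: mem_set; rewrite /= sum_indic_occupation Ni.
Qed.

Lemma max_sub_occupation (x : R) w : 0 <= x ->
  Num.max (x - indic_sum w) 0 = \sum_(i < (minn n (Num.truncn x)).+1)
    (x - i%:R) * \1_[set v | indic_sum v = i%:R] w.
Proof.
move=> x0; rewrite [RHS](@eq_bigr _ _ _ _ _ _ _
  (fun i : 'I__ => (x - i%:R) * (occupation w == i)%:R)) => [|i _]; last first.
  by congr (_ * _); exact: indic_occupationE.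
rewrite (sum_mul_eqn (fun i => x - i%:R)) sum_indic_occupation ltnS.
rewrite leq_min occupation_le /=; case: ifP => [|/negbT].
  by rewrite (truncn_ge_nat _ x0) => ? ; rewrite max_l // subr_ge0.
by rewrite -ltnNge (truncn_lt_nat _ x0) => ?; rewrite max_r // subr_le0 ltW.
Qed.

Lemma exprn_occupation nu w :
  indic_sum w ^+ nu =
  \sum_(i < n.+1) i%:R ^+ nu * \1_[set v | indic_sum v = i%:R] w.
Proof.
rewrite [RHS](@eq_bigr _ _ _ _ _ _ _
  (fun i : 'I__ => i%:R ^+ nu * (occupation w == i)%:R)) => [|i _]; last first.
  by congr (_ * _); exact: indic_occupationE.
by rewrite (sum_mul_eqn (fun i => i%:R ^+ nu)) ltnS occupation_le sum_indic_occupation.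
Qed.

Lemma exprn_occupation_cnuJ nu w : indic_sum w ^+ nu =
  \sum_(J : {set 'I_n}) (cnuJ nu J)%:R * \1_(\bigcap_(k in [set k | k \in J]) E k) w.
Proof.
rewrite expr_sum01 => [|k]; last by rewrite indicE; case: (w \in E k); [right|left].
apply: eq_bigr => J _; congr (_ * _); rewrite indicE.
have [inJ|] := pselect (forall k, k \in J -> w \in E k).
  rewrite mem_set => [|k kJ]; last exact/set_mem/inJ.
  by rewrite big1 // => k /inJ; rewrite indicE => ->.
move=> /existsNP[k /not_implyP[kJ /negP/negbTE notE]].
rewrite memNset => [|allJ]; last by move: notE; rewrite (mem_set (allJ k kJ)).
by rewrite (bigD1 k) //= indicE notE mul0r.
Qed.

Lemma occupation_eq_nE : [set v | indic_sum v = n%:R] = \bigcap_k E k.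
Proof.
apply/seteqP; split => w /=.
  rewrite sum_indic_occupation => /eqP; rewrite eqr_nat occupation_eq_n.
  by move=> /forallP allE k _; exact/set_mem/allE.
move=> allE; rewrite sum_indic_occupation; apply/eqP; rewrite eqr_nat occupation_eq_n.
by apply/forallP => k; exact/mem_set/allE.
Qed.

End occupation.

Lemma inside_bigcup {R : realType} {d : measure_display} {Omega : measurableType d}
    (S : R -> Omega -> R) lo hi (I : Type) (D : set I) (U : I -> set R) :
  inside S lo hi (\bigcup_(i in D) U i) = \bigcap_(i in D) inside S lo hi (U i).
Proof.
apply/seteqP; split => [w inw i Di u Uu|w inw u [i Di Uu]]; last exact: inw i Di u Uu.
by apply: inw; exists i.
Qed.

Lemma bigcup_itv_chain {R : realType} n (T : nat -> R) : (0 < n)%N ->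
  (forall k, (k < n)%N -> T k <= T k.+1) ->
  \bigcup_(k : 'I_n) [set` `[T k, T k.+1]] = [set` `[T 0%N, T n]].
Proof.
move=> n0 Tle; have Tmono i j : (i <= j <= n)%N -> T i <= T j.
  move=> /andP[+ jn]; elim: j jn => [|j ih] jn; first by rewrite leqn0 => /eqP ->.
  rewrite leq_eqVlt => /orP[/eqP -> //|]; rewrite ltnS => ij.
  by apply: le_trans (ih (ltnW jn) ij) (Tle _ jn).
apply/seteqP; split => [u [k _]|u].
  rewrite /= !in_itv /= => /andP[ku uk]; apply/andP; split.
    by apply: le_trans ku; apply: Tmono; exact: ltnW.
  by apply: (le_trans uk); apply: Tmono; rewrite ltn_ord leqnn.
rewrite /= in_itv /= => /andP[u0 un].
suff /(_ n.-1) : forall j, (j < n)%N -> u <= T j.+1 ->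
    exists2 k : 'I_n, setT k & u \in `[T k, T k.+1] by apply; rewrite ?ltn_predL ?prednK.
elim=> [|j ih] jn uj; first by exists (Ordinal jn) => //; rewrite in_itv /= u0.
have [|Tju] := leP u (T j.+1); first exact/ih/ltnW.
by exists (Ordinal jn) => //; rewrite in_itv /= (ltW Tju).
Qed.

Lemma indic_sum_windows_eq_n {R : realType} {d : measure_display}
    {Omega : measurableType d} (S : R -> Omega -> R) lo hi n (T : nat -> R) :
  (0 < n)%N -> (forall k, (k < n)%N -> T k <= T k.+1) ->
  [set w | \sum_(k < n) @indic _ R (inside S lo hi `[T k, T k.+1]) w = n%:R] =
  inside S lo hi `[T 0%N, T n].
Proof.
by move=> n0 Tle; rewrite occupation_eq_nE -inside_bigcup bigcup_itv_chain.
Qed.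

Lemma inside_bigcup_windows {R : realType} {d : measure_display}
    {Omega : measurableType d} (S : R -> Omega -> R) lo hi n (T : nat -> R) Per
    (J : {set 'I_n}) : (forall k, (k < n)%N -> T k.+1 = T k + Per) ->
  inside S lo hi (\bigcup_(j in [set j | j \in J]) [set` `[T j, T j + Per]]) =
  \bigcap_(k in [set k | k \in J]) inside S lo hi `[T k, T k.+1].
Proof.
by move=> Tsucc; rewrite inside_bigcup; apply: eq_bigcapr => k _; rewrite Tsucc.
Qed.

Section occupation_cond_exp.
Context {R : realType} {d : measure_display} {Omega : measurableType d}.
Context {P : probability Omega R} {G : set (set Omega)} {n : nat} {E : 'I_n -> set Omega}.
Hypotheses (sigmaG : sigma_algebra setT G) (subG : G `<=` measurable).
Hypothesis mE : forall k, measurable (E k).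

Local Notation indic_sum w := (\sum_(k < n) @indic _ R (E k) w).

Lemma integrable_indic_occupation (x : R) :
  P.-integrable setT (EFin \o \1_[set v | indic_sum v = x]).
Proof.
apply: integrable_indic; rewrite -[X in measurable X]setTI.
have mA : measurable_fun setT (fun w => indic_sum w).
  by apply: measurable_sum => k; exact: measurable_indic (mE k).
exact: mA measurableT _ (measurable_set1 x).
Qed.

Lemma cond_exp_exprn_occupation_cnuJ (pJ : {set 'I_n} -> Omega -> R) (nu : nat)
    (Y : Omega -> R) :
  (forall J : {set 'I_n},
    is_cond_exp P G \1_(\bigcap_(k in [set k | k \in J]) E k) (pJ J)) ->
  is_cond_exp P G (fun w => indic_sum w ^+ nu) Y ->
  {ae P, forall w, Y w = \sum_(J : {set 'I_n}) (cnuJ nu J)%:R * pJ J w}.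
Proof.
move=> cpJ cY; apply: (is_cond_exp_lincomb sigmaG subG {set 'I_n}
  (fun J => (cnuJ nu J)%:R) (fun J => \1_(\bigcap_(k in [set k | k \in J]) E k)) pJ)
  cY _ => [J|J|w].
- apply/integrable_indic/fin_bigcap_measurable => [|k _]; first exact: finite_finset.
  exact: mE.
- exact: cpJ.
- exact: exprn_occupation_cnuJ.
Qed.

Context {p : nat -> Omega -> R}.
Hypothesis cp : forall i, (i <= n)%N ->
  is_cond_exp P G \1_[set v | indic_sum v = i%:R] (p i).

Lemma cond_exp_max_occupation (x : R) (V : Omega -> R) : 0 <= x ->
  is_cond_exp P G (fun w => Num.max (x - indic_sum w) 0) V ->
  {ae P, forall w, V w = \sum_(i < (minn n (Num.truncn x)).+1) (x - i%:R) * p i w}.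
Proof.
move=> x0 cV; apply: (is_cond_exp_lincomb sigmaG subG 'I_(minn n (Num.truncn x)).+1
  (fun i => x - i%:R) (fun i => \1_[set v | indic_sum v = i%:R]) (fun i => p i))
  cV _ => [i|i|w].
- exact: integrable_indic_occupation.
- by apply: cp; rewrite -ltnS (leq_trans (ltn_ord i)) // ltnS geq_minl.
- exact: max_sub_occupation.
Qed.

Lemma cond_exp_exprn_occupation nu (Y : Omega -> R) :
  is_cond_exp P G (fun w => indic_sum w ^+ nu) Y ->
  {ae P, forall w, Y w = \sum_(i < n.+1) i%:R ^+ nu * p i w}.
Proof.
move=> cY; apply: (is_cond_exp_lincomb sigmaG subG 'I_n.+1 (fun i => i%:R ^+ nu)
  (fun i => \1_[set v | indic_sum v = i%:R]) (fun i => p i)) cY _ => [i|i|w].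
- exact: integrable_indic_occupation.
- by apply: cp; rewrite -ltnS.
- exact: exprn_occupation.
Qed.

End occupation_cond_exp.

Section geometric_brownian_motion.
Context {R : realType} {d : measure_display} {Omega : measurableType d}.
Context {P : probability Omega R} {F : R -> set (set Omega)} {W : R -> Omega -> R}
  {r sigma S0 : R} {S : R -> Omega -> R}.
Hypothesis SE : forall u w, S u w = S0 * expR ((r - sigma ^+ 2 / 2) * u + sigma * W u w).

Lemma measurable_gbm : is_filtration F -> std_BM P F W ->
  forall u, 0 <= u -> measurable_fun setT (S u).
Proof.
move=> hF [_ _ mW _ _] u u0; rewrite (funext (SE u)).
apply: measurable_funM; first exact: measurable_cst.
apply: measurableT_comp; first exact: measurable_expR.
apply: measurable_funD; first exact: measurable_cst.
apply: measurable_funM; first exact: measurable_cst.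
exact: G_measurable_measurable (hF.1 u u0).2 _ (mW u u0).
Qed.

Lemma continuous_gbm : std_BM P F W ->
  forall w u, 0 < u -> {for u, continuous (fun v => S v w)}.
Proof.
move=> [_ cW _ _ _] w u u0; rewrite (funext (SE ^~ w)).
have cWu : {for u, continuous (fun v => W v w)}.
  have [+ _] := (continuous_within_itvcyP 0 (fun v => W v w)).1 (cW w).
  by apply; rewrite in_itv /= u0.
apply: cvgM; first exact: cvg_cst.
apply: (continuous_comp (f := fun v => (r - sigma ^+ 2 / 2) * v + sigma * W v w)).
  by apply: cvgD; apply: cvgM; [exact: cvg_cst|exact: cvg_id|exact: cvg_cst|exact: cWu].
exact: continuous_expR.
Qed.

Lemma measurable_inside_gbm (lo hi a b : R) : is_filtration F -> std_BM P F W ->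
  0 < a < b -> measurable (inside S lo hi `[a, b]).
Proof.
move=> hF hBM /andP[a0 ab]; apply: measurable_inside => // [w u|u] /andP[au _].
  exact: continuous_gbm hBM w u (lt_le_trans a0 au).
exact: measurable_gbm hF hBM u (ltW (lt_le_trans a0 au)).
Qed.

End geometric_brownian_motion.

Theorem theorem4p1 (R : realType) (d : measure_display) (Omega : measurableType d)
  (P : probability Omega R) (F : R -> set (set Omega)) (W : R -> Omega -> R)
  (r sigma S0 : R) (S : R -> Omega -> R)
  (n : nat) (T : nat -> R) (Per Blow Bup Fk t : R) :
  is_filtration F -> std_BM P F W -> 0 < r -> 0 < sigma -> 0 < S0 ->
  (forall u w, S u w = S0 * expR ((r - sigma ^+ 2 / 2) * u + sigma * W u w)) ->
  (1 <= n)%N -> 0 < T 0%N -> 0 < Per ->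
  (forall i, (1 <= i <= n)%N -> T i = T i.-1 + Per) ->
  0 < Blow -> Blow < Bup -> 0 < Fk -> 0 <= t -> t < T 0%N ->
  let C := fun k : 'I_n => \1_(inside S Blow Bup `[T k, T k.+1]) : Omega -> R in
  let A := fun w => \sum_(k < n) C k w in
  forall (V : Omega -> R) (p : nat -> Omega -> R) (q : Omega -> R)
         (m : nat -> Omega -> R) (pJ : {set 'I_n} -> Omega -> R),
  is_cond_exp P (F t) (fun w => Num.max (Fk - A w) 0) V ->
  (forall i, (i <= n)%N -> is_cond_exp P (F t) \1_[set w | A w = i%:R] (p i)) ->
  is_cond_exp P (F t) \1_(inside S Blow Bup `[T 0%N, T n]) q ->
  (forall nu, (nu < n)%N -> is_cond_exp P (F t) (fun w => A w ^+ nu) (m nu)) ->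
  (forall J : {set 'I_n}, is_cond_exp P (F t)
      \1_(inside S Blow Bup (\bigcup_(j in [set j | j \in J]) [set` `[T j, T j + Per]]))
      (pJ J)) ->
  {ae P, forall w,
    [/\ expR (- r * (T n - t)) * V w =
        expR (- r * (T n - t)) *
          \sum_(0 <= i < (minn n (Num.truncn Fk)).+1) (Fk - i%:R) * p i w,
        p n w = q w,
        forall nu, (nu < n)%N -> m nu w = \sum_(i < n.+1) (i%:R) ^+ nu * p i w,
        forall x : nat -> R, x n = q w ->
          (forall nu, (nu < n)%N -> m nu w = \sum_(i < n.+1) (i%:R) ^+ nu * x i) ->
          forall i, (i <= n)%N -> x i = p i w
      & forall nu, (1 <= nu < n)%N ->
          m nu w = \sum_(J : {set 'I_n}) (cnuJ nu J)%:R * pJ J w]}.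
Proof.
move=> hF hBM _ _ _ SE n0 T00 Per0 Tstep _ _ Fk0 t0 _ C A V p q m pJ cV cp cq cm cpJ.
have [sigmaF subF] := hF.1 t t0.
have Tsucc k : (k < n)%N -> T k.+1 = T k + Per by move=> kn; rewrite Tstep.
have Tle k : (k < n)%N -> T k <= T k.+1 by move=> kn; rewrite Tsucc // lerDl ltW.
have Tpos k : (k <= n)%N -> 0 < T k.
  by elim: k => // k ih kn; rewrite Tsucc // addr_gt0 // ih // ltnW.
pose E (k : 'I_n) := inside S Blow Bup `[T k, T k.+1].
have mE k : measurable (E k).
  apply: (measurable_inside_gbm SE _ _ _ _ hF hBM).
  by rewrite Tsucc // Tpos 1?ltnW //= ltrDl.
have cpJE (J : {set 'I_n}) :
    is_cond_exp P (F t) \1_(\bigcap_(k in [set k | k \in J]) E k) (pJ J).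
  by rewrite /E -(inside_bigcup_windows _ _ _ _ _ _ J Tsucc).
have H1 := cond_exp_max_occupation sigmaF subF mE cp _ _ (ltW Fk0) cV.
have H2 : {ae P, forall w, p n w = q w}.
  apply: is_cond_exp_unique sigmaF subF _ _ _ (cp n (leqnn n)) _.
  by rewrite indic_sum_windows_eq_n.
have H3 := filter_forall (ae_filter_ringOfSetsType P) (fun nu : 'I_n =>
  cond_exp_exprn_occupation sigmaF subF mE cp nu _ (cm nu (ltn_ord nu))).
have H5 := filter_forall (ae_filter_ringOfSetsType P) (fun nu : 'I_n =>
  cond_exp_exprn_occupation_cnuJ sigmaF subF mE _ nu _ cpJE (cm nu (ltn_ord nu))).
near=> w.
have h2 : p n w = q w by near: w.
have h3 : forall nu : 'I_n, m nu w = \sum_(i < n.+1) i%:R ^+ nu * p i w by near: w.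
split=> //.
- by rewrite big_mkord; congr (_ * _); near: w.
- by move=> nu nun; exact: h3 (Ordinal nun).
- move=> x xn xm; apply: natr_moments_inj => [nu nun|]; last by rewrite xn h2.
  by rewrite -xm // (h3 (Ordinal nun)).
- have h5 : forall nu : 'I_n, m nu w = \sum_J (cnuJ nu J)%:R * pJ J w by near: w.
  by move=> nu /andP[_ nun]; exact: h5 (Ordinal nun).
Unshelve. all: end_near.
Qed.
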